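(* Let $G$ be a graph with $n$ vertices and at least one edge, and let $\Delta$ be its maximum vertex degree. Then $$EE(G) > e^{\sqrt{\Delta}} + (n-1) - \sqrt{\Delta}.$$
   Context: All graphs are finite, simple and undirected. For a graph $G$ with adjacency matrix $A(G)$ having eigenvalues $\lambda_1\ge\cdots\ge\lambda_n$, the Estrada index is $EE(G)=\sum_{i=1}^n e^{\lambda_i}$. *)

From HB Require Import structures.
From mathcomp Require Import all_boot all_order all_algebra.
From Stdlib Require Import Reals.
Set Implicit Arguments. Unset Strict Implicit. Unset Printing Implicit Defensive.

Definition simple_graph (n : nat) (e : rel 'I_n) : Prop :=
  symmetric e /\ irreflexive e.

Definition adjmx (n : nat) (e : rel 'I_n) : 'M[int]_n :=
  \matrix_(i, j) Posz (nat_of_bool (e i j)).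

Definition deg (n : nat) (e : rel 'I_n) (i : 'I_n) : nat := #|[set j | e i j]|.
Definition maxdeg (n : nat) (e : rel 'I_n) : nat := (\max_(i < n) deg e i)%N.

Definition int_to_R (z : int) : R :=
  match z with Posz k => INR k | Negz k => Ropp (INR (S k)) end.

Definition hornerR (p : {poly int}) (x : R) : R :=
  List.fold_right (fun c acc => Rplus (int_to_R c) (Rmult x acc)) 0%R (polyseq p).

(* l is the list of eigenvalues (with multiplicity) of the integer matrix A,
   i.e. the roots of its characteristic polynomial det(xI - A):
   det(xI - A) = prod_i (x - l_i) for every real x. *)
Definition is_spectrum (n : nat) (A : 'M[int]_n) (l : list R) : Prop :=
  List.length l = n /\
  forall x : R, hornerR (char_poly A) x =
                List.fold_right Rmult 1%R (List.map (fun t => Rminus x t) l).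

Definition estrada (l : list R) : R :=
  List.fold_right Rplus 0%R (List.map exp l).

From HB Require Import structures.
From mathcomp Require Import all_boot all_order all_algebra.
From Stdlib Require Import Reals Lra Lia.
From mathcomp Require Import Rstruct complex spectral sesquilinear.

(* The largest eigenvalue [mu] of the adjacency matrix is at least [sqrt Delta]:
   the star centred at a vertex of maximum degree supplies a test vector of
   Rayleigh quotient at least [sqrt Delta].  The eigenvalues sum to the trace,
   which is [0], so the other [n - 1] eigenvalues sum to [- mu <> 0]; by
   [e^x >= 1 + x], strict as soon as some [x] is nonzero, their exponentials add
   up to more than [n - 1 - mu].  Hence [EE(G) > e^mu + (n - 1) - mu], and
   [x |-> e^x - x] is nondecreasing on [[0, +oo)]. *)

Set Implicit Arguments. Unset Strict Implicit. Unset Printing Implicit Defensive.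

Section EstradaBounds.
Local Open Scope R_scope.
Local Notation sumR := (List.fold_right Rplus 0).

Lemma exp_sub_id_le (s mu : R) : 0 <= s <= mu -> exp s - s <= exp mu - mu.
Proof.
intros [Hs Hsmu].
assert (Hexp : exp mu = exp s * exp (mu - s)) by (rewrite <- exp_plus; f_equal; lra).
pose proof (exp_ineq1_le s); pose proof (exp_ineq1_le (mu - s)).
nra.
Qed.

Lemma estrada_ge_length_add_sum (l : list R) :
  INR (length l) + sumR l <= estrada l.
Proof.
unfold estrada; induction l as [|a l IH]; cbn [length List.map List.fold_right]; [simpl; lra|].
rewrite S_INR; pose proof (exp_ineq1_le a); lra.
Qed.

Lemma estrada_gt_length_add_sum (l : list R) :
  sumR l <> 0 -> INR (length l) + sumR l < estrada l.
Proof.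
induction l as [|a l IH]; cbn [length List.fold_right]; [lra|]; intros Hsum.
unfold estrada in *; cbn [List.map List.fold_right]; rewrite S_INR.
destruct (Req_dec a 0) as [-> | Ha].
- rewrite exp_0; assert (Hl : sumR l <> 0) by lra; specialize (IH Hl); lra.
- pose proof (exp_ineq1 a Ha); pose proof (estrada_ge_length_add_sum l).
  unfold estrada in *; lra.
Qed.

Lemma sumR_middle (l1 l2 : list R) (a : R) :
  sumR (app l1 (a :: l2)) = a + sumR (app l1 l2).
Proof. induction l1 as [|b l1 IH]; simpl; [lra | rewrite IH; lra]. Qed.

Lemma estrada_middle (l1 l2 : list R) (a : R) :
  estrada (app l1 (a :: l2)) = exp a + estrada (app l1 l2).
Proof. unfold estrada; rewrite !List.map_app; apply sumR_middle. Qed.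

Lemma estrada_gt_of_sum_eq0 (l : list R) (mu : R) :
  List.In mu l -> mu <> 0 -> sumR l = 0 ->
  exp mu + (INR (length l) - 1) - mu < estrada l.
Proof.
intros Hin Hmu Hsum; destruct (List.in_split mu l Hin) as [l1 [l2 ->]].
rewrite sumR_middle in Hsum; rewrite estrada_middle.
replace (length (app l1 (mu :: l2))) with (S (length (app l1 l2)))
  by (rewrite !List.length_app; simpl; lia).
rewrite S_INR.
pose proof (@estrada_gt_length_add_sum (app l1 l2)); lra.
Qed.

Lemma root_prod_sub_In (l : list R) (r : R) :
  List.fold_right Rmult 1 (List.map (fun t => r - t) l) = 0 -> List.In r l.
Proof.
induction l as [|a l IH]; simpl; intros H; [lra|].
destruct (Rmult_integral _ _ H) as [H1|H1]; [left; lra | right; auto].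
Qed.

End EstradaBounds.

Import Order.TTheory GRing.Theory Num.Theory.
Local Open Scope ring_scope.

Lemma exists_ge_weighted_mean (K : numDomainType) (I : finType) (a w : I -> K) (s : K) :
  s \is Num.real -> (forall k, a k \is Num.real) -> (forall k, 0 <= w k) ->
  0 < \sum_k w k -> s * \sum_k w k <= \sum_k a k * w k -> exists k, s <= a k.
Proof.
move=> s_real a_real w_ge0 w_gt0 s_le; apply/existsP.
apply: contraT; rewrite negb_exists => /forallP a_lt_s.
have gap_ge0 k : 0 <= (s - a k) * w k.
  by rewrite mulr_ge0 // subr_ge0 ltW // real_ltNge ?a_lt_s.
have gap_eq0 : \sum_k (s - a k) * w k = 0.
  apply/eqP; rewrite eq_le sumr_ge0 // andbT.
  by rewrite (eq_bigr _ (fun k _ => mulrBl _ _ _)) sumrB -mulr_sumr subr_le0.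
have w_eq0 k : w k = 0.
  move/eqP: (@psumr_eq0P _ _ _ _ (fun k _ => gap_ge0 k) gap_eq0 k isT).
  rewrite mulf_eq0 subr_eq0 => /orP[/eqP s_eq | /eqP //].
  by move: (a_lt_s k); rewrite s_eq lexx.
by move: w_gt0; rewrite big1 ?ltxx.
Qed.

Section SpectralDecomposition.
Local Open Scope sesquilinear_scope.
Variables (C : numClosedFieldType) (n : nat) (A : 'M[C]_n).
Hypothesis normalA : A \is normalmx.
Let P := spectralmx A.
Let d := spectral_diag A.

Let unitaryP : P \is unitarymx := spectral_unitarymx A.
Let A_diag : A = invmx P *m diag_mx d *m P := orthomx_spectralP normalA.
Let invP : invmx P = P^t* := invmx_unitary unitaryP.

Lemma spectral_diag_eigenvalue k : eigenvalue A (d 0 k).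
Proof.
apply/eigenvalueP; exists (row k P).
  have PA : P *m A = diag_mx d *m P.
    by rewrite {1}A_diag !mulmxA mulmxV ?spectral_unit // mul1mx.
  by rewrite -row_mul PA row_mul row_diag_mx -scalemxAl -rowE.
apply/negP => /eqP rowP0.
have : row k (P *m P^t*) = 0 by rewrite row_mul rowP0 mul0mx.
move/unitarymxP: unitaryP => ->; rewrite row1 => /matrixP /(_ 0 k).
by rewrite !mxE !eqxx /= => /eqP; rewrite oner_eq0.
Qed.

Lemma spectral_form (v : 'rV[C]_n) :
  (v *m A *m v^t*) 0 0 = \sum_k d 0 k * `|(v *m P^t*) 0 k| ^+ 2.
Proof.
have -> : v *m A *m v^t* = (v *m P^t*) *m diag_mx d *m (v *m P^t*)^t*.
  by rewrite trmx_mul map_mxM trmxCK {1}A_diag invP !mulmxA.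
by rewrite mul_mx_diag mxE; apply: eq_bigr => k _; rewrite !mxE normCK mulrAC mulrC mulrA.
Qed.

Lemma spectral_norm (v : 'rV[C]_n) :
  (v *m v^t*) 0 0 = \sum_k `|(v *m P^t*) 0 k| ^+ 2.
Proof.
have -> : v *m v^t* = (v *m P^t*) *m (v *m P^t*)^t*.
  by rewrite trmx_mul map_mxM trmxCK mulmxA mulmxKtV.
by rewrite mxE; apply: eq_bigr => k _; rewrite !mxE normCK.
Qed.

End SpectralDecomposition.

(* The spectral theorem is only available over a [numClosedFieldType], so a
   real symmetric matrix is handled through its complexification. *)
Section RealSymmetric.
Local Open Scope sesquilinear_scope.
Variables (F : rcfType) (n : nat) (A : 'M[F]_n).
Hypothesis symA : A^T = A.
Local Notation RC := (real_complex F).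

Lemma real_complexR (x : F) : RC x \is Num.real.
Proof. by rewrite complex_real. Qed.

Lemma real_complex_conj (x : F) : (RC x)^* = RC x.
Proof. by rewrite conj_Creal ?real_complexR. Qed.

Lemma map_real_complex_trC m p (M : 'M[F]_(m, p)) : (map_mx RC M)^t* = map_mx RC M^T.
Proof. by apply/matrixP => i j; rewrite !mxE real_complex_conj. Qed.

Lemma map_real_complex_hermsym : map_mx RC A \is hermsymmx.
Proof.
apply: realsym_hermsym; last by apply/mxOverP => i j; rewrite mxE real_complexR.
by apply/is_hermitianmxP; rewrite expr0 scale1r map_mx_id // map_trmx symA.
Qed.

Lemma symmetric_rayleigh_root (v : 'rV[F]_n) (s : F) :
  0 < (v *m v^T) 0 0 -> s * (v *m v^T) 0 0 <= (v *m A *m v^T) 0 0 ->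
  exists2 r, s <= r & root (char_poly A) r.
Proof.
move=> v_gt0 s_le.
set AC := map_mx RC A; set vC := map_mx RC v.
have normalAC : AC \is normalmx by apply/hermitian_normalmx/map_real_complex_hermsym.
have d_real k : spectral_diag AC 0 k \is Num.real.
  by move/mxOverP: (hermitian_spectral_diag_real map_real_complex_hermsym); apply.
set w := vC *m (spectralmx AC)^t*.
have formE : RC ((v *m A *m v^T) 0 0) = \sum_k spectral_diag AC 0 k * `|w 0 k| ^+ 2.
  by rewrite -(spectral_form normalAC) /vC /AC map_real_complex_trC -!map_mxM [RHS]mxE.
have normE : RC ((v *m v^T) 0 0) = \sum_k `|w 0 k| ^+ 2.
  by rewrite -(spectral_norm AC) /vC map_real_complex_trC -!map_mxM [RHS]mxE.
have [k sk] : exists k, RC s <= spectral_diag AC 0 k.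
  apply: (exists_ge_weighted_mean (w := fun k => `|w 0 k| ^+ 2) (real_complexR s) d_real).
  - by move=> k; rewrite exprn_ge0.
  - by rewrite -normE ltcR.
  - by rewrite -normE -formE -rmorphM lecR.
exists (complex.Re (spectral_diag AC 0 k)); first by rewrite -lecR RRe_real.
have := spectral_diag_eigenvalue normalAC k.
rewrite eigenvalue_root_char /AC -map_char_poly -(RRe_real (d_real k)).
by rewrite /root horner_map fmorph_eq0.
Qed.

End RealSymmetric.

Section StarVector.
Variables (F : numDomainType) (n : nat) (e : rel 'I_n).
Hypotheses (symE : symmetric e) (irrE : irreflexive e).
Local Notation A := (map_mx intr (adjmx e) : 'M[F]_n).

Lemma sum_adj_row (c : 'I_n) : \sum_j (e c j)%:R = (deg e c)%:R :> F.
Proof.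
rewrite -natr_sum /deg -sum1_card [in RHS]big_mkcond /=.
by congr _%:R; apply: eq_bigr => j _; rewrite inE; case: (e c j).
Qed.

(* For [s = sqrt (deg e c)] this is the Perron eigenvector of the star formed
   by [c] and its neighbours, whose largest eigenvalue is [s]. *)
Definition star_vector (c : 'I_n) (s : F) : 'rV[F]_n :=
  \row_j (if j == c then s else (e c j)%:R).

Lemma star_vector_norm (c : 'I_n) (s : F) :
  (star_vector c s *m (star_vector c s)^T) 0 0 = s ^+ 2 + (deg e c)%:R.
Proof.
rewrite mxE (bigD1 c) //= !mxE eqxx -expr2 -sum_adj_row [in RHS](bigD1 c) //= irrE add0r.
congr (_ + _); apply: eq_bigr => j /negbTE jc.
by rewrite !mxE jc; case: (e c j); rewrite ?mulr1 ?mulr0.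
Qed.

Lemma map_adjmxE (i j : 'I_n) : A i j = (e i j)%:R.
Proof. by rewrite !mxE. Qed.

Lemma star_vector_form_ge (c : 'I_n) (s : F) : 0 <= s ->
  s * (deg e c)%:R *+ 2 <= (star_vector c s *m A *m (star_vector c s)^T) 0 0.
Proof.
move=> s_ge0; set x := star_vector c s.
have x_ge0 j : 0 <= x 0 j by rewrite mxE; case: eqP.
have colE j : (x *m A) 0 j = \sum_i x 0 i * A i j by rewrite mxE.
have col_c : (x *m A) 0 c = (deg e c)%:R.
  rewrite colE -sum_adj_row; apply: eq_bigr => i _; rewrite mxE map_adjmxE symE.
  case: eqP => [->|_]; first by rewrite irrE mulr0.
  by case: (e i c); rewrite ?mulr1 ?mulr0.
have col_ge j : s * (e c j)%:R <= (x *m A) 0 j.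
  rewrite colE (bigD1 c) //= map_adjmxE mxE eqxx lerDl.
  by apply: sumr_ge0 => i _; rewrite map_adjmxE mulr_ge0.
rewrite mxE (bigD1 c) //= col_c !mxE eqxx mulrC mulr2n lerD //.
rewrite -sum_adj_row [in X in X <= _](bigD1 c) //= irrE add0r mulr_suml.
apply: ler_sum => j /negbTE jc.
have -> : x^T j 0 = (e c j)%:R by rewrite !mxE jc.
by case: (e c j) (col_ge j); rewrite ?mul1r ?mulr1 ?mul0r ?mulr0.
Qed.

End StarVector.

Lemma eq_poly_horner (F : numDomainType) (p q : {poly F}) :
  (forall x, p.[x] = q.[x]) -> p = q.
Proof.
move=> pq; apply/eqP; rewrite -subr_eq0; apply: contraT => pq_neq0.
have := max_poly_roots pq_neq0 (rs := [seq i%:R | i <- iota 0 (size (p - q))]).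
rewrite size_map size_iota ltnn; apply.
  by apply/allP => x _; rewrite /root hornerD hornerN pq subrr.
by rewrite map_inj_uniq ?iota_uniq // => i j /eqP; rewrite eqr_nat => /eqP.
Qed.

Lemma int_to_RE (z : int) : int_to_R z = z%:~R.
Proof. by case: z => k; rewrite /int_to_R ?NegzE ?rmorphN INRE ?RoppE. Qed.

Lemma hornerRE (p : {poly int}) (x : R) : hornerR p x = (map_poly intr p).[x].
Proof.
rewrite /hornerR map_polyE horner_Poly; elim: (polyseq p) => //= c s ->.
by rewrite int_to_RE RplusE RmultE addrC mulrC.
Qed.

Lemma fold_Rmult_subE (l : list R) (x : R) :
  List.fold_right Rmult 1%R (List.map (fun t => Rminus x t) l) =
  (\prod_(t <- l) ('X - t%:P)).[x].
Proof.
rewrite horner_prod; elim: l => [|a s IH] /=; first by rewrite big_nil.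
by rewrite big_cons IH hornerXsubC RmultE RminusE.
Qed.

Lemma fold_RplusE (l : list R) : List.fold_right Rplus 0%R l = \sum_(t <- l) t.
Proof. by elim: l => [|a s IH] /=; rewrite ?big_nil ?big_cons ?IH. Qed.

Lemma size_length (T : Type) (l : list T) : size l = List.length l.
Proof. by elim: l => //= _ s ->. Qed.

Section Spectrum.
Variables (n : nat) (A : 'M[int]_n) (l : list R).
Hypothesis specA : is_spectrum A l.

Lemma is_spectrum_char_poly :
  map_poly intr (char_poly A) = \prod_(t <- l) ('X - t%:P).
Proof. by apply: eq_poly_horner => x; rewrite -hornerRE -fold_Rmult_subE; case: specA. Qed.

Lemma is_spectrum_root (r : R) : root (map_poly intr (char_poly A)) r -> List.In r l.
Proof.
rewrite /root -hornerRE; case: specA => _ -> /eqP.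
exact: root_prod_sub_In.
Qed.

(* Both sides are minus the subleading coefficient of the characteristic
   polynomial. *)
Lemma is_spectrum_sum : List.fold_right Rplus 0%R l = (\tr A)%:~R.
Proof.
case: specA => length_l _; rewrite fold_RplusE.
have [n0|n_gt0] := posnP n.
  have -> : \tr A = 0 by rewrite /mxtrace big1 // => i; have := leq_trans (ltn_ord i) (eq_leq n0).
  by rewrite (@size0nil _ l) ?big_nil // size_length length_l n0.
apply: oppr_inj; rewrite -rmorphN -char_poly_trace // -coef_map is_spectrum_char_poly.
by rewrite -length_l -size_length coefPn_prod_XsubC // size_length length_l -lt0n.
Qed.

End Spectrum.

Lemma adjmx_trace (n : nat) (e : rel 'I_n) : irreflexive e -> \tr (adjmx e) = 0.
Proof. by move=> irrE; rewrite /mxtrace big1 // => i _; rewrite mxE irrE. Qed.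

Lemma adjmx_root_ge_sqrt_deg (F : rcfType) (n : nat) (e : rel 'I_n) (c : 'I_n) :
  symmetric e -> irreflexive e -> (0 < deg e c)%nat ->
  exists2 r : F, Num.sqrt (deg e c)%:R <= r & root (char_poly (map_mx intr (adjmx e))) r.
Proof.
move=> symE irrE deg_gt0; set s : F := Num.sqrt (deg e c)%:R.
have s_ge0 : 0 <= s := sqrtr_ge0 _.
have s2 : s ^+ 2 = (deg e c)%:R by rewrite sqr_sqrtr ?ler0n.
apply: (@symmetric_rayleigh_root _ _ _ _ (star_vector e c s)).
- by apply/matrixP => i j; rewrite !mxE symE.
- by rewrite star_vector_norm // s2 -mulr2n mulrn_wgt0 ?ltr0n.
- rewrite star_vector_norm // s2 -mulr2n mulrnAr.
  exact: star_vector_form_ge.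
Qed.

Lemma maxdeg_gt0 (n : nat) (e : rel 'I_n) (i j : 'I_n) : e i j -> (0 < maxdeg e)%nat.
Proof.
move=> eij; apply: leq_trans (leq_bigmax i).
by apply/card_gt0P; exists j; rewrite inE.
Qed.

Lemma adjmx_root_ge_sqrt_maxdeg (F : rcfType) (n : nat) (e : rel 'I_n) (i j : 'I_n) :
  symmetric e -> irreflexive e -> e i j ->
  exists2 r : F, Num.sqrt (maxdeg e)%:R <= r &
                 root (map_poly intr (char_poly (adjmx e))) r.
Proof.
move=> symE irrE eij.
have card_gt0 : (0 < #|'I_n|)%nat by rewrite card_ord (leq_ltn_trans _ (ltn_ord i)).
have [c maxdegE] := bigop.eq_bigmax (deg e) card_gt0.
rewrite /maxdeg maxdegE map_char_poly; apply: adjmx_root_ge_sqrt_deg => //.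
by rewrite -maxdegE (maxdeg_gt0 eij).
Qed.

Close Scope ring_scope.

Theorem mainTheorem2 (n : nat) (e : rel 'I_n) :
  simple_graph e ->
  (exists i j : 'I_n, e i j) ->
  forall l : list R, is_spectrum (adjmx e) l ->
  Rgt (estrada l)
      (Rminus (Rplus (exp (sqrt (INR (maxdeg e)))) (Rminus (INR n) 1%R))
              (sqrt (INR (maxdeg e)))).
Proof.
move=> [symE irrE] [i [j eij]] l specA.
set s := sqrt (INR (maxdeg e)).
have [r s_le_r root_r] := adjmx_root_ge_sqrt_maxdeg R symE irrE eij.
have {s_le_r} s_le_r : Rle s r by apply/RleP; rewrite /s RsqrtE INRE.
have s_gt0 : Rlt 0 s by apply/sqrt_lt_R0/lt_0_INR/ssrnat.ltP/(maxdeg_gt0 eij).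
have sum_l : List.fold_right Rplus 0%R l = 0%R.
  by rewrite (is_spectrum_sum specA) adjmx_trace.
have r_neq0 : r <> 0%R by lra.
have := estrada_gt_of_sum_eq0 (is_spectrum_root specA root_r) r_neq0 sum_l.
have := exp_sub_id_le (conj (Rlt_le _ _ s_gt0) s_le_r).
rewrite (proj1 specA) /Rgt; lra.
Qed.
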